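(* Let $(X,\rho)$ be a metric space, let $c>0$, and for $x,y\in X$ define $$W(x,y):=\log\Big(1+2c\sinh\frac{\rho(x,y)}{2}\Big).$$ If $c\ge 1$, then $W$ is a metric on $X$. Moreover, if $X=\mathbb{B}^2=\{x\in\mathbb{R}^2:|x|<1\}$ is the unit disk and $\rho=j_{\mathbb{B}^2}$, then $W$ is a metric on $\mathbb{B}^2$ if and only if $c\ge 1$.
   Context: For a proper nonempty open subset $D\subset\mathbb{R}^n$, $d_D(x)=\operatorname{dist}(x,\partial D)$, and the distance ratio metric is $j_D(x,y)=\log\Big(1+\frac{|x-y|}{\min\{d_D(x),d_D(y)\}}\Big)$ for $x,y\in D$. For the unit disk, $d_{\mathbb{B}^2}(x)=1-|x|$. *)

From Stdlib Require Import Reals.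
Open Scope R_scope.

Definition is_metric {X : Type} (d : X -> X -> R) : Prop :=
  (forall x y, 0 <= d x y) /\
  (forall x y, d x y = 0 <-> x = y) /\
  (forall x y, d x y = d y x) /\
  (forall x y z, d x z <= d x y + d y z).

Definition Wfun {X : Type} (c : R) (rho : X -> X -> R) (x y : X) : R :=
  ln (1 + 2 * c * sinh (rho x y / 2)).

Definition norm2 (p : R * R) : R := sqrt (fst p ^ 2 + snd p ^ 2).
Definition dist2 (p q : R * R) : R := norm2 (fst p - fst q, snd p - snd q).

Definition disk : Type := { p : R * R | norm2 p < 1 }.

Definition d_disk (x : disk) : R := 1 - norm2 (proj1_sig x).

Definition j_disk (x y : disk) : R :=
  ln (1 + dist2 (proj1_sig x) (proj1_sig y) / Rmin (d_disk x) (d_disk y)).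

(** Sufficiency: [t |-> log (1 + 2 c sinh (t/2))] vanishes only at [0], is
    increasing and, for [c >= 1], subadditive, because
    [sinh (u + v) <= sinh u + sinh v + 2 sinh u sinh v] (from [cosh <= 1 + sinh]);
    such a function maps metrics to metrics.

    Necessity: along a radius of the disk, [j] is additive:
    [j(0, r) = j(0, q) + j(q, r)] for [0 <= q <= r < 1].  So if [W] is a metric then
    [W(2t) <= 2 W(t)] for all [t >= 0], i.e. [cosh s <= 1 + c sinh s] for all
    [s > 0], which fails for [c < 1] since [cosh s - c sinh s] grows like
    [(1 - c) e^s / 2]. *)

From Stdlib Require Import Reals Lra Psatz ProofIrrelevance FunctionalExtensionality.
From Coquelicot Require Import Coquelicot.
Open Scope R_scope.

Lemma ln_1_plus_nonneg (a : R) : 0 <= a -> 0 <= ln (1 + a).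
Proof. intro ha. rewrite <- ln_1. apply ln_le; lra. Qed.

Lemma ln_1_plus_pos (a : R) : 0 < a -> 0 < ln (1 + a).
Proof. intro ha. rewrite <- ln_1. apply ln_increasing; lra. Qed.

Lemma sinh_le (a b : R) : a <= b -> sinh a <= sinh b.
Proof.
  intro hab. destruct (Rle_lt_or_eq_dec _ _ hab) as [hlt | ->].
  - left. now apply sinh_lt.
  - apply Rle_refl.
Qed.

Lemma sinh_pos (t : R) : 0 < t -> 0 < sinh t.
Proof. intro ht. rewrite <- sinh_0. now apply sinh_lt. Qed.

Lemma sinh_nonneg (t : R) : 0 <= t -> 0 <= sinh t.
Proof. intro ht. rewrite <- sinh_0. now apply sinh_le. Qed.

Lemma sinh_plus (u v : R) : sinh (u + v) = sinh u * cosh v + cosh u * sinh v.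
Proof.
  unfold sinh, cosh. rewrite Ropp_plus_distr, !exp_plus. field.
Qed.

Lemma cosh_minus_sinh (s : R) : cosh s - sinh s = exp (- s).
Proof. unfold cosh, sinh. field. Qed.

Lemma exp_le (a b : R) : a <= b -> exp a <= exp b.
Proof.
  intro hab. destruct (Rle_lt_or_eq_dec _ _ hab) as [hlt | ->].
  - left. now apply exp_increasing.
  - apply Rle_refl.
Qed.

Lemma cosh_le_1_plus_sinh (v : R) : 0 <= v -> cosh v <= 1 + sinh v.
Proof.
  intro hv. pose proof (cosh_minus_sinh v). pose proof (exp_le (- v) 0 ltac:(lra)).
  rewrite exp_0 in *. lra.
Qed.

Lemma sinh_plus_le (u v : R) : 0 <= u -> 0 <= v ->
  sinh (u + v) <= sinh u + sinh v + 2 * sinh u * sinh v.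
Proof.
  intros hu hv. rewrite sinh_plus.
  pose proof (cosh_le_1_plus_sinh u hu). pose proof (cosh_le_1_plus_sinh v hv).
  pose proof (sinh_nonneg u hu). pose proof (sinh_nonneg v hv).
  nra.
Qed.

Section MetricComp.

Variable f : R -> R.
Hypothesis f_0 : f 0 = 0.
Hypothesis f_pos : forall t, 0 < t -> 0 < f t.
Hypothesis f_le : forall s t, 0 <= s -> s <= t -> f s <= f t.
Hypothesis f_subadd : forall s t, 0 <= s -> 0 <= t -> f (s + t) <= f s + f t.

Lemma is_metric_comp (X : Type) (d : X -> X -> R) :
  is_metric d -> is_metric (fun x y => f (d x y)).
Proof.
  intros [d_ge0 [d_eq0 [d_sym d_tri]]].
  assert (f_ge0 : forall t, 0 <= t -> 0 <= f t).
  { intros t ht. destruct (Rle_lt_or_eq_dec _ _ ht) as [h | <-].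
    - now left; apply f_pos.
    - rewrite f_0. apply Rle_refl. }
  split; [| split; [| split]].
  - intros x y. apply f_ge0, d_ge0.
  - intros x y. rewrite <- d_eq0. split.
    + intro hf. destruct (d_ge0 x y) as [h | h]; [| now rewrite h].
      specialize (f_pos _ h). lra.
    + intro h. now rewrite h.
  - intros x y. now rewrite d_sym.
  - intros x y z. eapply Rle_trans; [apply f_le | apply f_subadd]; auto.
Qed.

End MetricComp.

Definition wmap (c t : R) : R := ln (1 + 2 * c * sinh (t / 2)).

Lemma Wfun_wmap (X : Type) (c : R) (rho : X -> X -> R) (x y : X) :
  Wfun c rho x y = wmap c (rho x y).
Proof. reflexivity. Qed.

Section Wmap.

Variable c : R.
Hypothesis c_pos : 0 < c.

Lemma wmap_arg_ge1 (t : R) : 0 <= t -> 1 <= 1 + 2 * c * sinh (t / 2).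
Proof.
  intro ht. pose proof (sinh_nonneg (t / 2) ltac:(lra)). nra.
Qed.

Lemma wmap_0 : wmap c 0 = 0.
Proof.
  unfold wmap. replace (0 / 2) with 0 by field.
  rewrite sinh_0, Rmult_0_r, Rplus_0_r. apply ln_1.
Qed.

Lemma wmap_pos (t : R) : 0 < t -> 0 < wmap c t.
Proof.
  intro ht. apply ln_1_plus_pos. pose proof (sinh_pos (t / 2) ltac:(lra)). nra.
Qed.

Lemma wmap_le (s t : R) : 0 <= s -> s <= t -> wmap c s <= wmap c t.
Proof.
  intros hs hst. apply ln_le.
  - pose proof (wmap_arg_ge1 s hs). lra.
  - pose proof (sinh_le (s / 2) (t / 2) ltac:(lra)). nra.
Qed.

Lemma wmap_subadd (s t : R) : 1 <= c -> 0 <= s -> 0 <= t ->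
  wmap c (s + t) <= wmap c s + wmap c t.
Proof.
  intros hc1 hs ht. unfold wmap.
  pose proof (wmap_arg_ge1 s hs). pose proof (wmap_arg_ge1 t ht).
  rewrite <- ln_mult by lra. apply ln_le; [pose proof (wmap_arg_ge1 (s + t) ltac:(lra)); lra |].
  replace ((s + t) / 2) with (s / 2 + t / 2) by field.
  pose proof (sinh_plus_le (s / 2) (t / 2) ltac:(lra) ltac:(lra)).
  pose proof (sinh_nonneg (s / 2) ltac:(lra)). pose proof (sinh_nonneg (t / 2) ltac:(lra)).
  assert (0 <= c * (c - 1) * (sinh (s / 2) * sinh (t / 2))).
  { apply Rmult_le_pos; [apply Rmult_le_pos |]; nra. }
  nra.
Qed.

Lemma is_metric_Wfun (X : Type) (rho : X -> X -> R) :
  1 <= c -> is_metric rho -> is_metric (Wfun c rho).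
Proof.
  intros hc1 hrho. apply (is_metric_comp (wmap c) wmap_0 wmap_pos wmap_le); auto.
  intros s t. now apply wmap_subadd.
Qed.

(** Witness [s = ln (2 / (1 - c))]: then [(1 - c) e^s / 2 = 1], so [cosh s > 1 + c sinh s]. *)
Lemma wmap_not_subadd : c < 1 -> exists t, 0 <= t /\ wmap c t + wmap c t < wmap c (t + t).
Proof.
  intro hc1. set (s := ln (2 / (1 - c))).
  assert (es : exp s = 2 / (1 - c)) by (apply exp_ln, Rdiv_lt_0_compat; lra).
  assert (s_pos : 0 < s).
  { apply exp_lt_inv. rewrite es, exp_0.
    apply (Rmult_lt_reg_r (1 - c)); [lra |]. field_simplify; lra. }
  exists (s + s). split; [lra |].
  pose proof (sinh_pos s s_pos).
  assert (cosh_gt : 1 + c * sinh s < cosh s).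
  { assert (e : cosh s - c * sinh s = 1 + (1 + c) * exp (- s) / 2).
    { unfold cosh, sinh. rewrite es. field. lra. }
    pose proof (exp_pos (- s)). nra. }
  unfold wmap. replace ((s + s) / 2) with s by field.
  replace ((s + s + (s + s)) / 2) with (s + s) by field.
  rewrite <- ln_mult by nra. apply ln_increasing; [nra |].
  rewrite sinh_plus.
  assert (0 < c * sinh s * (cosh s - 1 - c * sinh s)).
  { apply Rmult_lt_0_compat; [apply Rmult_lt_0_compat |]; lra. }
  nra.
Qed.

End Wmap.

Section DistanceRatio.

Variables (X : Type) (d : X -> X -> R) (delta : X -> R).
Hypothesis d_metric : is_metric d.
Hypothesis delta_pos : forall x, 0 < delta x.
Hypothesis delta_lipschitz : forall x y, delta y <= delta x + d x y.

Definition distance_ratio (x y : X) : R := ln (1 + d x y / Rmin (delta x) (delta y)).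

Lemma distance_ratio_triangle_factor (dx dy dz A B E : R) :
  0 < dx -> 0 < dy -> dx <= dz -> 0 <= A -> 0 <= B -> E <= A + B -> dy <= dx + A ->
  1 + E / Rmin dx dz <= (1 + A / Rmin dx dy) * (1 + B / Rmin dy dz).
Proof.
  intros hx hy hxz hA hB hE hyx. rewrite (Rmin_left dx dz hxz).
  destruct (Rle_lt_dec dx dy) as [hxy | hyx'].
  - rewrite (Rmin_left dx dy hxy).
    set (m := Rmin dy dz).
    assert (hm : dx <= m <= dx + A).
    { split; [now apply Rmin_glb | pose proof (Rmin_l dy dz); unfold m; lra]. }
    apply Rmult_le_reg_r with (dx * m); [nra |].
    replace ((1 + E / dx) * (dx * m)) with (dx * m + E * m) by (field; lra).
    replace ((1 + A / dx) * (1 + B / m) * (dx * m)) with ((dx + A) * (m + B)) by (field; lra).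
    nra.
  - rewrite (Rmin_right dx dy) by lra. rewrite (Rmin_left dy dz) by lra.
    apply Rmult_le_reg_r with (dx * (dy * dy)); [repeat apply Rmult_lt_0_compat; lra |].
    replace ((1 + E / dx) * (dx * (dy * dy))) with ((dx + E) * (dy * dy)) by (field; lra).
    replace ((1 + A / dy) * (1 + B / dy) * (dx * (dy * dy)))
      with (dx * ((dy + A) * (dy + B))) by (field; lra).
    assert (E * (dy * dy) <= (A + B) * (dy * dy)) by (apply Rmult_le_compat_r; nra).
    assert ((A + B) * (dy * dy) <= (A + B) * (dy * dx))
      by (apply Rmult_le_compat_l; [| apply Rmult_le_compat_l]; lra).
    assert (0 <= dx * (A * B)) by (apply Rmult_le_pos; nra).
    nra.
Qed.

Lemma is_metric_distance_ratio : is_metric distance_ratio.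
Proof.
  destruct d_metric as [d_ge0 [d_eq0 [d_sym d_tri]]].
  assert (min_pos : forall x y, 0 < Rmin (delta x) (delta y)) by (intros; now apply Rmin_pos).
  assert (ratio_ge0 : forall x y, 0 <= d x y / Rmin (delta x) (delta y)).
  { intros x y. apply Rdiv_le_0_compat; auto. }
  assert (sym : forall x y, distance_ratio x y = distance_ratio y x).
  { intros x y. unfold distance_ratio. now rewrite d_sym, Rmin_comm. }
  assert (tri : forall x y z, delta x <= delta z ->
    distance_ratio x z <= distance_ratio x y + distance_ratio y z).
  { intros x y z hxz. unfold distance_ratio.
    pose proof (ratio_ge0 x y). pose proof (ratio_ge0 y z). pose proof (ratio_ge0 x z).
    rewrite <- ln_mult by lra. apply ln_le; [lra |].
    apply distance_ratio_triangle_factor; auto. }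
  split; [| split; [| split]]; auto.
  - intros x y. now apply ln_1_plus_nonneg.
  - intros x y. rewrite <- d_eq0. unfold distance_ratio. split.
    + intro h0. destruct (d_ge0 x y) as [h | h]; [| now symmetry].
      pose proof (ln_1_plus_pos _ (Rdiv_lt_0_compat _ _ h (min_pos x y))). lra.
    + intro h. rewrite h. unfold Rdiv. now rewrite Rmult_0_l, Rplus_0_r, ln_1.
  - intros x y z. destruct (Rle_lt_dec (delta x) (delta z)) as [h | h]; [now apply tri |].
    rewrite (sym x z), (sym x y), (sym y z), Rplus_comm. apply tri. lra.
Qed.

End DistanceRatio.

Lemma is_metric_norm_minus {K : AbsRing} {V : NormedModule K} :
  is_metric (fun x y : V => norm (minus x y)).
Proof.
  split; [| split; [| split]].
  - intros x y. apply norm_ge_0.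
  - intros x y. split.
    + intro h. apply norm_eq_zero in h.
      apply (plus_reg_r (opp y)). change (minus x y = minus y y).
      now rewrite minus_eq_zero.
    + intros ->. rewrite minus_eq_zero. apply norm_zero.
  - intros x y. now rewrite <- norm_opp, opp_minus.
  - intros x y z. rewrite (minus_trans y). apply norm_triangle.
Qed.

Lemma is_metric_sig (A : Type) (P : A -> Prop) (d : A -> A -> R) :
  is_metric d -> is_metric (fun x y : {a | P a} => d (proj1_sig x) (proj1_sig y)).
Proof.
  intros [d_ge0 [d_eq0 [d_sym d_tri]]].
  split; [| split; [| split]]; auto.
  intros [x hx] [y hy]. cbn. rewrite d_eq0. split.
  - intros <-. f_equal. apply proof_irrelevance.
  - intro h. now inversion h.
Qed.

Lemma norm2_norm (p : R * R) : norm2 p = norm p.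
Proof.
  destruct p as [a b]. unfold norm2. cbn -[pow]. unfold prod_norm, abs. cbn -[pow].
  now rewrite !pow2_abs.
Qed.

Lemma dist2_norm (p q : R * R) : dist2 p q = norm (minus p q).
Proof. unfold dist2. now rewrite norm2_norm. Qed.

Lemma is_metric_dist2 : is_metric dist2.
Proof.
  assert (E : dist2 = fun p q => norm (minus p q)).
  { do 2 (apply functional_extensionality; intro). apply dist2_norm. }
  rewrite E. exact is_metric_norm_minus.
Qed.

Lemma d_disk_pos (x : disk) : 0 < d_disk x.
Proof. destruct x as [p hp]. unfold d_disk. cbn. lra. Qed.

Lemma d_disk_lipschitz (x y : disk) :
  d_disk y <= d_disk x + dist2 (proj1_sig x) (proj1_sig y).
Proof.
  assert (h : norm (proj1_sig x) - norm (proj1_sig y) <= dist2 (proj1_sig x) (proj1_sig y)).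
  { rewrite dist2_norm. eapply Rle_trans; [apply Rle_abs | exact (norm_triangle_inv _ _)]. }
  unfold d_disk. rewrite !norm2_norm. lra.
Qed.

Lemma is_metric_j_disk : is_metric j_disk.
Proof.
  apply (is_metric_distance_ratio disk (fun x y => dist2 (proj1_sig x) (proj1_sig y)) d_disk).
  - apply is_metric_sig, is_metric_dist2.
  - exact d_disk_pos.
  - exact d_disk_lipschitz.
Qed.

Lemma norm2_axis (a : R) : norm2 (a, 0) = Rabs a.
Proof.
  unfold norm2. cbn [fst snd]. rewrite <- (pow2_abs a).
  replace (Rabs a ^ 2 + 0 ^ 2) with (Rabs a ^ 2) by ring.
  apply sqrt_pow2, Rabs_pos.
Qed.

Lemma axis_point (x : R) : 0 <= x < 1 -> exists p : disk, proj1_sig p = (x, 0).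
Proof.
  intro hx. assert (h : norm2 (x, 0) < 1) by (rewrite norm2_axis, Rabs_pos_eq; lra).
  now exists (exist _ (x, 0) h).
Qed.

Lemma j_disk_axis (p q : disk) (x y : R) :
  proj1_sig p = (x, 0) -> proj1_sig q = (y, 0) -> 0 <= x <= y ->
  j_disk p q = ln ((1 - x) / (1 - y)).
Proof.
  intros hp hq hxy.
  assert (hy : y < 1).
  { destruct q as [q' hq']. cbn in hq. subst q'. rewrite norm2_axis, Rabs_pos_eq in hq'; lra. }
  unfold j_disk, d_disk, dist2. rewrite hp, hq. cbn [fst snd].
  rewrite Rminus_diag, !norm2_axis, Rabs_minus_sym, !Rabs_pos_eq by lra.
  rewrite Rmin_right by lra. f_equal. field. lra.
Qed.

Lemma j_disk_radial_chain (u : R) : 0 <= u ->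
  exists p q r : disk, j_disk p q = u /\ j_disk q r = u /\ j_disk p r = u + u.
Proof.
  intro hu.
  pose proof (exp_pos (- u)). pose proof (exp_pos (- (u + u))).
  pose proof (exp_le (- u) 0 ltac:(lra)). pose proof (exp_le (- (u + u)) (- u) ltac:(lra)).
  rewrite exp_0 in *.
  destruct (axis_point 0 ltac:(lra)) as [p hp].
  destruct (axis_point (1 - exp (- u)) ltac:(lra)) as [q hq].
  destruct (axis_point (1 - exp (- (u + u))) ltac:(lra)) as [r hr].
  exists p, q, r.
  rewrite (j_disk_axis p q _ _ hp hq), (j_disk_axis q r _ _ hq hr), (j_disk_axis p r _ _ hp hr)
    by lra.
  pose proof (exp_pos u).
  rewrite !exp_Ropp, exp_plus in *.
  split; [| split].
  - replace ((1 - 0) / (1 - (1 - / exp u))) with (exp u) by (field; lra). apply ln_exp.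
  - replace ((1 - (1 - / exp u)) / (1 - (1 - / (exp u * exp u)))) with (exp u)
      by (field; lra).
    apply ln_exp.
  - replace ((1 - 0) / (1 - (1 - / (exp u * exp u)))) with (exp (u + u))
      by (rewrite exp_plus; field; lra).
    apply ln_exp.
Qed.

Lemma Wfun_j_disk_metric_ge1 (c : R) : 0 < c -> is_metric (Wfun c j_disk) -> 1 <= c.
Proof.
  intros hc [_ [_ [_ htri]]]. destruct (Rlt_le_dec c 1) as [hc1 | hc1]; [exfalso | exact hc1].
  destruct (wmap_not_subadd c hc hc1) as [t [ht hbad]].
  destruct (j_disk_radial_chain t ht) as [p [q [r [hpq [hqr hpr]]]]].
  specialize (htri p q r). rewrite !Wfun_wmap, hpq, hqr, hpr in htri. lra.
Qed.

Theorem theorem1p1 (c : R) (hc : 0 < c) :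
  (forall (X : Type) (rho : X -> X -> R),
     is_metric rho -> 1 <= c -> is_metric (Wfun c rho)) /\
  (is_metric (Wfun c j_disk) <-> 1 <= c).
Proof.
  split; [| split].
  - intros X rho hrho hc1. now apply is_metric_Wfun.
  - now apply Wfun_j_disk_metric_ge1.
  - intro hc1. now apply is_metric_Wfun, is_metric_j_disk.
Qed.
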